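(* Let $q$ be a prime power, let $\alpha$ be a primitive element of $\mathbb{F}_{q^n}$, and let $1\le t_1<\cdots<t_r<n$ be divisors of $n$ such that $t_i$ divides $t_{i+1}$ for $1\le i\le r-1$. Let $\mathcal{F}=(\mathbb{F}_{q^{t_1}},\ldots,\mathbb{F}_{q^{t_r}})$ be the Galois flag of this type on $\mathbb{F}_{q^n}$. Let $\beta\in\mathbb{F}_{q^n}^*$ with $\langle\beta\rangle=\langle\alpha^l\rangle$ for a divisor $l$ of $q^n-1$. For $1\le i\le r$ put $c_i=\frac{q^n-1}{q^{t_i}-1}$ and $l_i=\mathrm{lcm}(l,c_i)$. Then: (1) $d_f(\mathrm{Orb}_\beta(\mathcal{F}))=0$ if and only if $l_1=l_r=l$; (2) $d_f(\mathrm{Orb}_\beta(\mathcal{F}))=2\sum_{i=1}^r t_i$ if and only if $l_1=l_r\neq l$; (3) $d_f(\mathrm{Orb}_\beta(\mathcal{F}))=2\sum_{i=1}^{j-1}t_i$ if and only if $l_1\neq l_r$ and $j\in\{2,\ldots,r\}$ is the minimum index such that $l_1\neq l_j$.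
   Context: $\mathbb{F}_{q^n}$ is regarded as an $\mathbb{F}_q$-vector space. For $\gamma\in\mathbb{F}_{q^n}^*$, $\mathcal{U}\gamma=\{u\gamma:u\in\mathcal{U}\}$ and $\mathcal{F}\gamma=(\mathcal{F}_1\gamma,\ldots,\mathcal{F}_r\gamma)$. For $\beta$ of multiplicative order $|\beta|$, $\mathrm{Orb}_\beta(\mathcal{F})=\{\mathcal{F}\beta^j:0\le j\le|\beta|-1\}$. Subspace distance: $d_S(\mathcal{U},\mathcal{V})=\dim(\mathcal{U}+\mathcal{V})-\dim(\mathcal{U}\cap\mathcal{V})$; flag distance $d_f(\mathcal{F},\mathcal{F}')=\sum_{i=1}^r d_S(\mathcal{F}_i,\mathcal{F}'_i)$. The minimum distance $d_f(\mathcal{C})$ of a set of flags is the minimum flag distance between distinct elements, and $0$ if $|\mathcal{C}|=1$. *)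

From HB Require Import structures.
From mathcomp Require Import all_boot all_order all_algebra all_field.
Set Implicit Arguments. Unset Strict Implicit. Unset Printing Implicit Defensive.
Import GRing.Theory.
Local Open Scope ring_scope.

(* F_{q^n} is L : fieldExtType F with #|F| = q and \dim {:L} = n;
   subspaces are F-subspaces {vspace L}.  Flags of length r are indexed 1..r
   by functions nat -> {vspace L} (only indices 1..r are relevant). *)
Section FlagDefs.
Variables (F : finFieldType) (L : fieldExtType F).

Definition vshift (U : {vspace L}) (g : L) : {vspace L} := (U * <[g]>)%VS.

Definition flag_shift (Fl : nat -> {vspace L}) (g : L) : nat -> {vspace L} :=
  fun i => vshift (Fl i) g.

Definition dS (U V : {vspace L}) : nat := (\dim (U + V) - \dim (U :&: V))%N.

Definition dflag (r : nat) (A B : nat -> {vspace L}) : nat :=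
  (\sum_(1 <= i < r.+1) dS (A i) (B i))%N.

Definition flag_eq (r : nat) (A B : nat -> {vspace L}) : bool :=
  [forall i : 'I_r, A i.+1 == B i.+1].

(* Orb_beta(F) = { F beta^j : 0 <= j <= m-1 }, m = multiplicative order of beta *)
Definition Orb (Fl : nat -> {vspace L}) (b : L) (m : nat) : seq (nat -> {vspace L}) :=
  [seq flag_shift Fl (b ^+ j) | j <- iota 0 m].

(* minimum distance of a (nonempty) set of flags: min over distinct pairs,
   0 if all elements coincide (|C| = 1) *)
Definition flag_min_dist (r : nat) (C : seq (nat -> {vspace L})) : nat :=
  let ds := flatten [seq [seq dflag r A B | B <- C & ~~ flag_eq r A B] | A <- C] in
  if ds is d :: ds' then foldr minn d ds' else 0%N.

End FlagDefs.

From HB Require Import structures.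
From mathcomp Require Import all_boot all_order all_algebra all_field.
From mathcomp Require Import zify.
Set Implicit Arguments. Unset Strict Implicit. Unset Printing Implicit Defensive.
Import GRing.Theory.

(* Shifting a subfield K by nonzero g, h gives subspaces Kg, Kh that coincide
   when g/h lies in K and meet trivially otherwise, so they are at subspace
   distance 0 or 2 dim K.  Quotients of elements of the orbit of beta are
   exactly the powers alpha^(ls), and alpha^k lies in F_(q^t_i) iff c_i | k,
   i.e. alpha^(ls) does iff l_i | ls.  Hence the distance between F and
   F alpha^(ls) is the sum of 2 t_i over the i with l_i not dividing ls.  As
   l_r | ... | l_1, these i form an initial segment [1, j); the smallest
   possible j >= 2 is the first index at which l_j differs from l_1 (with the
   convention l_(r+1) = l), and it is reached for ls = l_j. *)

Lemma chain_homo (T : Type) (e : rel T) (f : nat -> T) (r : nat) :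
  reflexive e -> transitive e -> (forall i, 1 <= i < r -> e (f i) (f i.+1)) ->
  forall i j, 1 <= i <= j -> j <= r -> e (f i) (f j).
Proof.
move=> e_refl e_trans e_step i j /andP[i1 ij] jr.
apply: (@homo_leq_in T [pred k | 0 < k <= r] f e) => //; rewrite ?inE.
- move=> a b /[!inE] /andP[a1 _] /andP[_ br] k /andP[ak kb].
  by rewrite inE (leq_trans a1 (ltnW ak)) (leq_trans (ltnW kb) br).
- by move=> k /[!inE] /andP[k1 _] /andP[_ kr]; apply: e_step; rewrite k1.
- by rewrite i1 (leq_trans ij jr).
- by rewrite (leq_trans i1 ij) jr.
Qed.

Lemma pred_expn_dvd q a b : a %| b -> (q ^ a).-1 %| (q ^ b).-1.
Proof. by case/dvdnP=> u ->; rewrite mulnC expnM dvdn_pred_predX. Qed.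

Lemma divn_dvd_antimono N a b : a %| b -> b %| N -> N %/ b %| N %/ a.
Proof.
move=> ab bN; rewrite dvdn_divRL ?(dvdn_trans ab bN) //.
by rewrite -{2}(divnK bN) dvdn_mul.
Qed.

(* The flag distance between a Galois flag and its shift by alpha^(l s). *)
Definition shift_dflag (r l : nat) (t c : nat -> nat) (s : nat) : nat :=
  \sum_(1 <= i < r.+1) (if c i %| l * s then 0 else 2 * t i).

Definition is_min_on (P : pred nat) (w : nat -> nat) (d : nat) : Prop :=
  (exists2 s, P s & d = w s) /\ (forall s, P s -> d <= w s).

Lemma is_min_on_uniq P w d d' : is_min_on P w d -> is_min_on P w d' -> d = d'.
Proof.
by move=> [[s Ps ->] min_s] [[s' Ps' ->] min_s']; apply/eqP; rewrite eqn_leq min_s ?min_s'.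
Qed.

Definition min_dist_spec (r l : nat) (t c : nat -> nat) (d : nat) : Prop :=
  ((forall s, c 1 %| l * s) -> d = 0) /\
  ((exists s, ~~ (c 1 %| l * s)) ->
     is_min_on [pred s | ~~ (c 1 %| l * s)] (shift_dflag r l t c) d).

Section FirstJump.
Variables (r l : nat) (t c : nat -> nat).
Hypothesis r_gt0 : 0 < r.
Hypothesis t_gt0 : forall i, 1 <= i <= r -> 0 < t i.
Hypothesis c_dvd : forall i j, 1 <= i <= j -> j <= r -> c j %| c i.

Local Notation li i := (lcmn l (c i)).
Local Notation tsum j := (\sum_(1 <= i < j) t i).

(* l_j, extended by l_(r+1) = l. *)
Definition lcm_at j := lcmn l (if j <= r then c j else 1).

Definition first_jump j :=
  lcm_at 1 <> lcm_at j /\ forall k, 2 <= k < j -> lcm_at 1 = lcm_at k.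

Lemma lcm_atE i : i <= r -> lcm_at i = li i.
Proof. by rewrite /lcm_at => ->. Qed.

Lemma lcm_at_last : lcm_at r.+1 = l.
Proof. by rewrite /lcm_at ltnn lcmn1. Qed.

Lemma lcm_at_dvd i j : 1 <= i <= j -> j <= r.+1 -> lcm_at j %| lcm_at i.
Proof.
move=> /andP[i1 ij] jr; rewrite /lcm_at dvdn_lcm dvdn_lcml /=.
apply: dvdn_trans (dvdn_lcmr _ _); case: ifP => [jr'|_]; last exact: dvd1n.
by rewrite (leq_trans ij jr') c_dvd ?i1.
Qed.

Lemma dvd_lcm_at i s : i <= r -> (c i %| l * s) = (lcm_at i %| l * s).
Proof. by move=> ir; rewrite lcm_atE // dvdn_lcm (dvdn_mulr _ (dvdnn l)). Qed.

Lemma lcm_at_sandwich k : li 1 = li r -> 1 <= k <= r -> li 1 = li k.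
Proof.
move=> + /andP[k1 kr]; rewrite -!lcm_atE // => e; apply/eqP.
by rewrite eqn_dvd {1}e !lcm_at_dvd ?k1 ?kr ?(leqW kr).
Qed.

Lemma tsum_lt j j' : 1 <= j < j' -> j' <= r.+1 -> tsum j < tsum j'.
Proof.
move=> /andP[j1 jj'] j'r; rewrite (big_cat_nat j1 (ltnW jj')) /= -[X in X < _]addn0.
by rewrite ltn_add2l big_ltn // ltn_addr // t_gt0 // j1 -ltnS (leq_trans jj').
Qed.

Lemma tsum_inj j j' : 1 <= j <= r.+1 -> 1 <= j' <= r.+1 -> tsum j = tsum j' -> j = j'.
Proof.
move=> /andP[j1 jr] /andP[j'1 j'r] e.
case: (ltngtP j j') => // [jj'|j'j].
  by move: (tsum_lt (j:=j) (j':=j')); rewrite j1 jj' e ltnn => /(_ isT j'r).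
by move: (tsum_lt (j:=j') (j':=j)); rewrite j'1 j'j e ltnn => /(_ isT jr).
Qed.

Lemma first_jump_moves j s : j <= r.+1 -> first_jump j -> ~~ (c 1 %| l * s) ->
  forall i, 1 <= i < j -> ~~ (c i %| l * s).
Proof.
move=> jr [_ flat] moved i /andP[i1 ij]; case: (eqVneq i 1) => [-> //|i_ne1].
have ir : i <= r by rewrite -ltnS (leq_trans ij).
by rewrite dvd_lcm_at // -flat -?dvd_lcm_at // ij ltn_neqAle eq_sym i_ne1 i1.
Qed.

Lemma shift_dflag_split j s :
  1 <= j <= r.+1 -> (forall i, 1 <= i < j -> ~~ (c i %| l * s)) ->
  shift_dflag r l t c s =
  2 * tsum j + \sum_(j <= i < r.+1) (if c i %| l * s then 0 else 2 * t i).
Proof.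
move=> /andP[j1 jr] moved; rewrite /shift_dflag (big_cat_nat j1 jr) big_distrr /=.
by congr (_ + _); apply: eq_big_nat => i /moved /negbTE ->.
Qed.

Lemma first_jump_is_min j : 2 <= j <= r.+1 -> first_jump j ->
  is_min_on [pred s | ~~ (c 1 %| l * s)] (shift_dflag r l t c) (2 * tsum j).
Proof.
move=> /andP[j2 jr] jump; have j1 : 1 <= j <= r.+1 by rewrite ltnW.
split=> [|s /= moved]; last first.
  by rewrite (shift_dflag_split j1 (first_jump_moves jr jump moved)) leq_addr.
pose s := lcm_at j %/ l.
have ls : l * s = lcm_at j by rewrite mulnC divnK // dvdn_lcml.
have moved : ~~ (c 1 %| l * s).
  rewrite dvd_lcm_at // ls; apply/negP => dv; apply: jump.1; apply/eqP.
  by rewrite eqn_dvd dv lcm_at_dvd ?(ltnW j2).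
exists s => //; rewrite (shift_dflag_split j1 (first_jump_moves jr jump moved)).
rewrite [X in _ + X]big1_seq ?addn0 // => i /andP[_].
rewrite mem_index_iota => /andP[ji ir].
have jr' : j <= r := leq_trans ji ir.
have ji' : 1 <= j <= i by rewrite (ltnW j2).
by rewrite ls lcm_atE // (dvdn_trans (c_dvd ji' ir)) ?dvdn_lcmr.
Qed.

Lemma first_jump_exists : lcm_at 1 != l -> exists2 j, 2 <= j <= r.+1 & first_jump j.
Proof.
move=> moved; pose jumps j := (1 < j) && (lcm_at 1 != lcm_at j).
have [|j0 /andP[j0_gt1 /eqP jump] j0_min] := ex_minnP (ex_intro jumps r.+1 _).
  by rewrite /jumps ltnS r_gt0 lcm_at_last.
exists j0; first by rewrite j0_gt1 j0_min // /jumps ltnS r_gt0 lcm_at_last.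
split=> // k /andP[k_gt1 kj0]; apply/eqP; apply: contraTT kj0 => k_jump.
by rewrite -leqNgt j0_min // /jumps k_gt1.
Qed.

Lemma min_dist_first_jump d j : min_dist_spec r l t c d -> lcm_at 1 != l ->
  2 <= j <= r.+1 -> d = 2 * tsum j <-> first_jump j.
Proof.
move=> [_ d_min] moved jr; have [j0 j0r jump0] := first_jump_exists moved.
have min0 := first_jump_is_min j0r jump0.
have -> : d = 2 * tsum j0.
  by apply: is_min_on_uniq (d_min _) (min0); case: min0.1 => s ms _; exists s.
split=> [e|jump]; last exact: is_min_on_uniq (min0) (first_jump_is_min jr jump).
suff -> : j = j0 by [].
by apply: tsum_inj; lia.
Qed.

Lemma first_jump_last : first_jump r.+1 <-> li 1 = li r /\ li r <> l.
Proof.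
rewrite /first_jump lcm_at_last lcm_atE //.
split=> [[jump flat]|[e ne]].
  have e : li 1 = li r.
    case: (eqVneq r 1) => [-> //|r_ne1].
    by rewrite -[li r]lcm_atE // (flat r) // ltnSn ltn_neqAle eq_sym r_ne1 r_gt0.
  by split=> //; rewrite -e.
split=> [|k /andP[k2 kr]]; first by rewrite e.
by rewrite lcm_atE //; apply: lcm_at_sandwich e _; rewrite (ltnW k2).
Qed.

Lemma first_jump_inner j : 2 <= j <= r -> first_jump j <->
  [/\ li 1 <> li r, li 1 <> li j & forall k, 2 <= k < j -> li 1 = li k].
Proof.
move=> /andP[j2 jr]; rewrite /first_jump !lcm_atE //.
have kr k : k < j -> k <= r by move/ltnW/leq_trans; apply.
split=> [[jump flat]|[_ jump flat]].
  split=> // [e|k /andP[k2 kj]]; first by apply/jump/(lcm_at_sandwich e); rewrite (ltnW j2).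
  by rewrite -[li k]lcm_atE ?kr // (flat k) // k2.
by split=> // k /andP[k2 kj]; rewrite lcm_atE ?kr // (flat k) // k2.
Qed.

Lemma lcm_jump_trichotomy d : min_dist_spec r l t c d ->
  [/\ d = 0 <-> li 1 = li r /\ li r = l,
      d = 2 * tsum r.+1 <-> li 1 = li r /\ li r <> l
    & forall j, 2 <= j <= r -> d = 2 * tsum j <->
        [/\ li 1 <> li r, li 1 <> li j & forall k, 2 <= k < j -> li 1 = li k]].
Proof.
move=> spec; have l1 : lcm_at 1 = li 1 := lcm_atE r_gt0.
have tsum_gt0 j : 2 <= j <= r.+1 -> 0 < tsum j.
  by case/andP=> j2 jr; have := tsum_lt (j:=1) (j':=j); rewrite big_geq // => ->.
case: (eqVneq (lcm_at 1) l) => [fixed|moved].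
  have d0 : d = 0.
    apply: spec.1 => s; apply: dvdn_trans (dvdn_mulr _ (dvdnn l)).
    by rewrite -fixed l1 dvdn_lcmr.
  have lr : li r = l.
    apply/eqP; rewrite eqn_dvd dvdn_lcml andbT -[X in _ %| X]fixed -lcm_atE //.
    by rewrite lcm_at_dvd ?r_gt0.
  rewrite l1 in fixed; rewrite d0 fixed lr; split=> // [|j jr].
    by split=> [e|[_ []] //]; have := tsum_gt0 r.+1; lia.
  by split=> [e|[] //]; have := tsum_gt0 j; lia.
have [j0 j0r jump0] := first_jump_exists moved.
have dj0 : d = 2 * tsum j0 by apply/(min_dist_first_jump spec moved j0r).
split=> [|| j jr].
- split=> [d0|[e1 er]]; first by have := tsum_gt0 j0 j0r; lia.
  by case/eqP: moved; rewrite l1 e1 er.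
- apply: iff_trans (min_dist_first_jump spec moved _) first_jump_last.
  by rewrite ltnSn andbT.
- apply: iff_trans (min_dist_first_jump spec moved _) (first_jump_inner jr).
  by case/andP: jr => -> /leqW.
Qed.

End FirstJump.

Lemma foldr_minn_mem (x : nat) xs : foldr minn x xs \in x :: xs.
Proof.
elim: xs => [|y xs IH] /=; first exact: mem_head.
rewrite /minn; case: ifP => _; first by rewrite !inE eqxx orbT.
by move: IH; rewrite !inE => /orP[->|->]; rewrite ?orbT.
Qed.

Lemma foldr_minn_le (x : nat) xs y : y \in x :: xs -> foldr minn x xs <= y.
Proof.
elim: xs y => [|z xs IH] y /=; first by rewrite mem_seq1 => /eqP->.
rewrite !inE geq_min => /or3P[/eqP->|/eqP->|y_xs].
- by rewrite IH ?mem_head ?orbT.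
- by rewrite leqnn.
- by rewrite IH ?orbT // inE y_xs orbT.
Qed.

Local Open Scope ring_scope.

Section FlagMinDist.
Variables (F : finFieldType) (L : fieldExtType F) (r : nat).
Variables (I : eqType) (f : I -> nat -> {vspace L}) (s : seq I).

Local Notation distinct a b := (~~ flag_eq r (f a) (f b)).

Let dists :=
  flatten [seq [seq dflag r (f a) (f b) | b <- s & distinct a b] | a <- s].

Let flag_min_distE :
  flag_min_dist r (map f s) = if dists is x :: xs then foldr minn x xs else 0%N.
Proof.
rewrite /flag_min_dist /dists -map_comp; congr (if flatten _ is _ :: _ then _ else _).
by apply: eq_map => a /=; rewrite filter_map -map_comp.
Qed.

Let mem_dists x : reflect
  (exists a b, [/\ a \in s, b \in s, distinct a b & x = dflag r (f a) (f b)])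
  (x \in dists).
Proof.
apply: (iffP flattenP) => [[_ /mapP[a sa ->] /mapP[b]]|[a [b [sa sb ab ->]]]].
  by rewrite mem_filter => /andP[ab sb] ->; exists a, b.
by exists [seq dflag r (f a) (f b) | b <- s & distinct a b];
  [apply: map_f | apply/mapP; exists b; rewrite ?mem_filter ?ab].
Qed.

Lemma flag_min_dist_eq0 :
  (forall a b, a \in s -> b \in s -> flag_eq r (f a) (f b)) ->
  flag_min_dist r (map f s) = 0%N.
Proof.
move=> all_eq; rewrite flag_min_distE; case E: dists => [|x xs] //.
have /mem_dists[a [b [sa sb ab _]]] : x \in dists by rewrite E mem_head.
by rewrite all_eq in ab.
Qed.

Lemma flag_min_dist_le a b : a \in s -> b \in s -> distinct a b ->
  (flag_min_dist r (map f s) <= dflag r (f a) (f b))%N.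
Proof.
move=> sa sb ab; have : dflag r (f a) (f b) \in dists.
  by apply/mem_dists; exists a, b.
by rewrite flag_min_distE; case: dists => // x xs; apply: foldr_minn_le.
Qed.

Lemma flag_min_dist_attained a b : a \in s -> b \in s -> distinct a b ->
  exists a' b', [/\ a' \in s, b' \in s, distinct a' b'
                 & flag_min_dist r (map f s) = dflag r (f a') (f b')].
Proof.
move=> sa sb ab; apply/mem_dists; rewrite flag_min_distE.
have : dflag r (f a) (f b) \in dists by apply/mem_dists; exists a, b.
by case: dists => // x xs _; apply: foldr_minn_mem.
Qed.

End FlagMinDist.

Section SubfieldShift.
Variables (F : finFieldType) (L : fieldExtType F).
Implicit Types (U : {vspace L}) (K : {subfield L}) (g h x : L).

Lemma mem_vshift U g x : g != 0 -> (x \in vshift U g) = (x / g \in U).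
Proof.
move=> g0; rewrite /vshift -limg_amulr.
apply/memv_imgP/idP => [[u Uu ->]|xg]; first by rewrite lfunE /= mulfK.
by exists (x / g) => //; rewrite lfunE /= divfK.
Qed.

Lemma dim_vshift U g : g != 0 -> \dim (vshift U g) = \dim U.
Proof.
move=> g0; rewrite /vshift -limg_amulr limg_dim_eq //.
by rewrite (eqP (lker0_amulr _)) ?capv0 ?unitfE.
Qed.

Lemma vshift_subfield_eq K g h : g != 0 -> h != 0 ->
  (vshift K g == vshift K h) = (g / h \in K).
Proof.
move=> g0 h0; apply/eqP/idP => [e|gh].
  have : g \in vshift K g by rewrite mem_vshift // divff // mem1v.
  by rewrite e mem_vshift.
apply/vspaceP => x; rewrite !mem_vshift //; apply/idP/idP => xK.
  suff -> : x / h = x / g * (g / h) by exact: rpredM.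
  by rewrite mulrA divfK.
suff -> : x / g = x / h / (g / h) by exact: rpred_div.
by rewrite invf_div mulrA divfK.
Qed.

Lemma dS_vshift_subfield K g h : g != 0 -> h != 0 ->
  dS (vshift K g) (vshift K h) = if g / h \in K then 0%N else (2 * \dim K)%N.
Proof.
move=> g0 h0; case: ifPn => gh.
  by move: gh; rewrite -vshift_subfield_eq // => /eqP->; rewrite /dS addvv capvv subnn.
have cap0 : (vshift K g :&: vshift K h)%VS = 0%VS.
  apply/eqP; rewrite -subv0; apply/subvP => x; rewrite memv_cap !mem_vshift // memv0.
  case/andP=> xg xh; apply: contraR gh => x0.
  suff -> : g / h = x / h / (x / g) by exact: rpred_div.
  by rewrite invf_div [RHS]mulrC mulrA divfK.
have := dimv_sum_cap (vshift K g) (vshift K h).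
by rewrite /dS cap0 dimv0 addn0 subn0 !dim_vshift // => ->; rewrite mul2n addnn.
Qed.

End SubfieldShift.

Lemma expr_mem_subfield (F : finFieldType) (L : fieldExtType F) (K : {subfield L})
    (N k : nat) (a : L) :
  N.-primitive_root a -> ((#|F| ^ \dim K).-1 %| N)%N ->
  (a ^+ k \in K) = (N %/ (#|F| ^ \dim K).-1 %| k)%N.
Proof.
move=> a_prim dvdN.
have Q_gt1 : (1 < #|F| ^ \dim K)%N.
  by rewrite -[1%N](expn0 #|F|) ltn_exp2l ?finNzRing_gt1 ?adim_gt0.
rewrite Fermat's_little_theorem -exprM (eq_prim_root_expr a_prim).
rewrite eqn_mod_dvd ?leq_pmulr 1?ltnW // -[X in (_ - X)%N]muln1 -mulnBr subn1.
by rewrite dvdn_divLR // -subn1 subn_gt0.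
Qed.

Section GaloisFlagOrbit.
Variables (F : finFieldType) (L : fieldExtType F).
Variables (r l m : nat) (t c : nat -> nat) (K : nat -> {subfield L}) (alpha beta : L).
Hypothesis r_gt0 : (0 < r)%N.
Hypothesis dim_K : forall i, (1 <= i <= r)%N -> \dim (K i) = t i.
Hypothesis c_dvd : forall i j, (1 <= i <= j)%N -> (j <= r)%N -> (c j %| c i)%N.
Hypothesis alpha_mem_K :
  forall i k, (1 <= i <= r)%N -> (alpha ^+ k \in K i) = (c i %| k)%N.
Hypothesis beta_neq0 : beta != 0.
Hypothesis beta_prim : m.-primitive_root beta.
Hypothesis beta_gen :
  forall x, (exists k, x = beta ^+ k) <-> (exists k, x = (alpha ^+ l) ^+ k).

Local Notation Fl := (fun i => (K i : {vspace L})).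
Local Notation orbit := (fun j => flag_shift Fl (beta ^+ j)).

Lemma orbit_ratio a b : (b < m)%N -> exists s, beta ^+ a / beta ^+ b = alpha ^+ (l * s).
Proof.
move=> bm; have [k beta_k] := (beta_gen beta).1 (ex_intro _ 1%N (esym (expr1 beta))).
exists (k * (a + (m - b)))%N; rewrite mulnA 2!exprM -beta_k exprD.
rewrite -(mulKf (expf_neq0 b beta_neq0) (beta ^+ (m - b))) -exprD (subnKC (ltnW bm)).
by rewrite (prim_expr_order beta_prim) mulr1.
Qed.

Lemma orbit_hits s : exists2 a, (a < m)%N & beta ^+ a = alpha ^+ (l * s).
Proof.
have [k alpha_k] := (beta_gen ((alpha ^+ l) ^+ s)).2 (ex_intro _ s erefl).
exists (k %% m)%N; first by rewrite ltn_pmod ?(prim_order_gt0 beta_prim).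
by rewrite (prim_expr_mod beta_prim) exprM alpha_k.
Qed.

Lemma flag_eq_shift_ratio g h s : g != 0 -> h != 0 -> g / h = alpha ^+ (l * s) ->
  flag_eq r (flag_shift Fl g) (flag_shift Fl h) = (c 1 %| l * s)%N.
Proof.
move=> g0 h0 gh; apply/forallP/idP => [/(_ (Ordinal r_gt0))|dv i].
  by rewrite /flag_shift vshift_subfield_eq // gh alpha_mem_K // r_gt0.
have ir : (1 <= i.+1 <= r)%N by rewrite ltn_ord.
rewrite /flag_shift vshift_subfield_eq // gh alpha_mem_K //.
exact: dvdn_trans (c_dvd _ _) dv.
Qed.

Lemma dflag_shift_ratio g h s : g != 0 -> h != 0 -> g / h = alpha ^+ (l * s) ->
  dflag r (flag_shift Fl g) (flag_shift Fl h) = shift_dflag r l t c s.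
Proof.
move=> g0 h0 gh; apply: eq_big_nat => i ir.
by rewrite /flag_shift dS_vshift_subfield // gh alpha_mem_K ?dim_K.
Qed.

Lemma orbit_min_dist_spec : min_dist_spec r l t c (flag_min_dist r (Orb Fl beta m)).
Proof.
have beta_pow_neq0 a : beta ^+ a != 0 by rewrite expf_neq0.
have ratio a b : b \in iota 0 m -> exists s, beta ^+ a / beta ^+ b = alpha ^+ (l * s).
  by rewrite mem_iota => /andP[_ bm]; apply: orbit_ratio.
have hit s : exists2 a, a \in iota 0 m & beta ^+ a / beta ^+ 0 = alpha ^+ (l * s).
  by have [a am e] := orbit_hits s; exists a; rewrite ?mem_iota ?expr0 ?divr1.
split=> [fixed|[s0 moved0]].
  apply: (flag_min_dist_eq0 (f := orbit)) => a b _ /(ratio a) [s e].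
  by rewrite (flag_eq_shift_ratio _ _ e).
have [a0 a0m e0] := hit s0.
have m0 : 0%N \in iota 0 m by rewrite mem_iota (prim_order_gt0 beta_prim).
have distinct0 : ~~ flag_eq r (flag_shift Fl (beta ^+ a0)) (flag_shift Fl (beta ^+ 0)).
  by rewrite (flag_eq_shift_ratio _ _ e0).
split=> [|s /= moved].
  have [a [b [_ bm ab ->]]] := flag_min_dist_attained (f := orbit) a0m m0 distinct0.
  have [s e] := ratio a b bm; exists s; last exact: dflag_shift_ratio e.
  by rewrite /= -(flag_eq_shift_ratio _ _ e).
have [a am e] := hit s; rewrite -(dflag_shift_ratio _ _ e) //.
by apply: (flag_min_dist_le (f := orbit)); rewrite ?(flag_eq_shift_ratio _ _ e).
Qed.

End GaloisFlagOrbit.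

Theorem theorem4p15
  (F : finFieldType) (L : fieldExtType F) (q n : nat)
  (hq : #|F| = q) (hn : \dim {:L} = n)
  (alpha : L) (halpha : (q ^ n).-1.-primitive_root alpha)
  (r : nat) (t : nat -> nat) (hr : (0 < r)%N)
  (ht1 : (1 <= t 1)%N) (htr : (t r < n)%N)
  (htlt : forall i, (1 <= i < r)%N -> (t i < t i.+1)%N)
  (htdvd : forall i, (1 <= i < r)%N -> (t i %| t i.+1)%N)
  (htn : forall i, (1 <= i <= r)%N -> (t i %| n)%N)
  (K : nat -> {subfield L})
  (hK : forall i, (1 <= i <= r)%N -> \dim (K i) = t i)
  (beta : L) (hbeta : beta != 0) (m : nat) (hm : m.-primitive_root beta)
  (l : nat) (hl : (l %| (q ^ n).-1)%N)
  (hgen : forall x : L, (exists k : nat, x = beta ^+ k) <-> (exists k : nat, x = (alpha ^+ l) ^+ k)) :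
  let Fl : nat -> {vspace L} := fun i => (K i : {vspace L}) in
  let c : nat -> nat := fun i => ((q ^ n).-1 %/ (q ^ t i).-1)%N in
  let li : nat -> nat := fun i => lcmn l (c i) in
  let d := flag_min_dist r (Orb Fl beta m) in
  [/\ d = 0%N <-> (li 1%N = li r /\ li r = l),
      d = (2 * \sum_(1 <= i < r.+1) t i)%N <-> (li 1%N = li r /\ li r <> l)
    & forall j, (2 <= j <= r)%N ->
        (d = (2 * \sum_(1 <= i < j) t i)%N <->
         [/\ li 1%N <> li r, li 1%N <> li j
           & forall k, (2 <= k < j)%N -> li 1%N = li k])].
Proof.
move=> Fl c li d.
have t_le := chain_homo (f := t) leqnn leq_trans (fun k hk => ltnW (htlt k hk)).
have t_dvd := chain_homo (f := t) dvdnn dvdn_trans htdvd.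
have t_gt0 i : (1 <= i <= r)%N -> (0 < t i)%N.
  by case/andP=> i1 ir; apply: leq_trans ht1 (t_le 1%N i _ ir); rewrite i1.
have c_dvd i j : (1 <= i <= j)%N -> (j <= r)%N -> (c j %| c i)%N.
  move=> ij jr; have /andP[i1 i_le_j] := ij.
  apply: divn_dvd_antimono; apply: pred_expn_dvd; first exact: t_dvd.
  by apply: htn; rewrite jr (leq_trans i1 i_le_j).
have alpha_mem_K i k : (1 <= i <= r)%N -> (alpha ^+ k \in K i) = (c i %| k)%N.
  by move=> ir; rewrite (expr_mem_subfield (K := K i) k halpha) hq hK // pred_expn_dvd ?htn.
exact (lcm_jump_trichotomy hr t_gt0 c_dvd
  (orbit_min_dist_spec hr hK c_dvd alpha_mem_K hbeta hm hgen)).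
Qed.
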